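(* Let $(\Omega,\mathcal F,(\mathcal F_n)_{n\ge 0},\mathbb P)$ be a filtered probability space. Let $f,g:\{0,1,2,\ldots\}\to\mathbb R$ be non-decreasing functions with $-f(0)<g(0)$. (a) Let $(M_n)_{n\ge0}$ be a supermartingale with $M_n\ge -f(n)$ for all $n\ge 0$ and with $\mathbb E[M_0]\in[-f(0),g(0)]$. Then \[ \mathbb P\{\exists n\ge 0: M_n\ge g(n)\}\;\le\;1-\frac{g(0)-\mathbb E[M_0]}{g(0)+f(0)}\prod_{n=1}^\infty\frac{g(n)+f(n-1)}{g(n)+f(n)}. \] (b) For every $m\in[-f(0),g(0)]$ there exist a filtered probability space and a martingale $(M_n)_{n\ge0}$ on it with $M_n\ge -f(n)$ for all $n\ge 0$ and $\mathbb E[M_0]=m$ for which the inequality in (a) holds with equality.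
   Context: An adapted process $(M_n)_{n\ge0}$ is a supermartingale if $\mathbb E[|M_n|]<\infty$ and $\mathbb E[M_{n+1}\mid\mathcal F_n]\le M_n$ for all $n\ge 0$. *)

From HB Require Import structures.
From mathcomp Require Import all_boot all_order all_algebra.
From mathcomp Require Import all_classical all_reals all_analysis.
Set Implicit Arguments. Unset Strict Implicit. Unset Printing Implicit Defensive.
Import Order.TTheory GRing.Theory Num.Theory.
Import numFieldNormedType.Exports.
Local Open Scope classical_set_scope.
Local Open Scope ring_scope.

Section Defs.
Context {d : measure_display} {T : measurableType d} {R : realType}.

Definition sub_sigma_algebra (G : set (set T)) :=
  sigma_algebra setT G /\ G `<=` measurable.

Definition filtration (F : nat -> set (set T)) :=
  (forall n, sub_sigma_algebra (F n)) /\ (forall n, F n `<=` F n.+1).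

Definition G_measurable (G : set (set T)) (X : T -> R) :=
  forall B : set R, measurable B -> G (X @^-1` B).

Definition adapted (F : nat -> set (set T)) (M : nat -> T -> R) :=
  forall n, G_measurable (F n) (M n).

Definition is_cond_exp (P : probability T R) (G : set (set T)) (X Y : T -> R) :=
  [/\ G_measurable G Y, P.-integrable setT (EFin \o Y) &
      forall A, G A -> (\int[P]_(x in A) (Y x)%:E = \int[P]_(x in A) (X x)%:E)%E].

Definition supermartingale (P : probability T R) (F : nat -> set (set T))
    (M : nat -> T -> R) :=
  [/\ adapted F M, (forall n, P.-integrable setT (EFin \o M n)) &
      forall n, exists Y, is_cond_exp P (F n) (M n.+1) Y /\
        {ae P, forall x, Y x <= M n x}].

Definition martingale (P : probability T R) (F : nat -> set (set T))
    (M : nat -> T -> R) :=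
  [/\ adapted F M, (forall n, P.-integrable setT (EFin \o M n)) &
      forall n, exists Y, is_cond_exp P (F n) (M n.+1) Y /\
        {ae P, forall x, Y x = M n x}].

Definition expect (P : probability T R) (X : T -> R) : R :=
  fine (\int[P]_x (X x)%:E)%E.

End Defs.

Definition inf_prod {R : realType} (u : nat -> R) : R :=
  lim ((fun N => \prod_(1 <= n < N.+1) u n) @ \oo).

Definition bound_rhs {R : realType} (f g : nat -> R) (e0 : R) : R :=
  1 - (g 0%N - e0) / (g 0%N + f 0%N) *
      inf_prod (fun n => (g n + f n.-1) / (g n + f n)).

(* Let A_n be the event that M_k < g_k for all k <= n, q_n = P(A_n) and
   D_n = g_n q_n - E[M_n; A_n].  Since M_n >= -f_n, D_n <= (g_n + f_n) q_n;
   the supermartingale inequality on A_n, together with M_(n+1) >= g_(n+1) on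
   A_n \ A_(n+1), gives D_(n+1) >= D_n + (g_(n+1) - g_n) q_n.  Combining both
   with D_0 >= g_0 - E[M_0] yields by induction
     q_n >= (g_0 - E[M_0]) / (g_0 + f_0) * prod_(k=1..n) (g_k + f_(k-1)) / (g_k + f_k),
   and the hitting probability is lim (1 - q_n).
   Equality holds for the martingale on nat that sits at -f_n while below the
   barrier, jumps to g_(n+1) with the probability keeping it a martingale, and
   then stays at the barrier: all the inequalities above become equalities. *)

From HB Require Import structures.
From mathcomp Require Import all_boot all_order all_algebra.
From mathcomp Require Import all_classical all_reals all_analysis.
From mathcomp Require Import lra zify.
Import Order.TTheory GRing.Theory Num.Theory.
Import numFieldNormedType.Exports.
Local Open Scope classical_set_scope.
Local Open Scope ring_scope.
Set Implicit Arguments. Unset Strict Implicit. Unset Printing Implicit Defensive.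

Section partial_product.
Variables (R : realType) (u : nat -> R).

Definition partial_prod N : R := \prod_(1 <= n < N.+1) u n.

Lemma partial_prod0 : partial_prod 0 = 1.
Proof. by rewrite /partial_prod big_geq. Qed.

Lemma partial_prodS N : partial_prod N.+1 = partial_prod N * u N.+1.
Proof. by rewrite /partial_prod big_nat_recr. Qed.

Hypotheses (u_ge0 : forall n, 0 <= u n) (u_le1 : forall n, u n <= 1).

Lemma partial_prod_ge0 N : 0 <= partial_prod N.
Proof. by rewrite /partial_prod prodr_ge0. Qed.

Lemma partial_prod_nonincreasing : nonincreasing_seq partial_prod.
Proof.
apply/nonincreasing_seqP => N; rewrite partial_prodS.
by rewrite -[leRHS]mulr1 ler_wpM2l ?partial_prod_ge0.
Qed.

Lemma partial_prod_is_cvg : cvgn partial_prod.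
Proof.
apply: nonincreasing_is_cvgn; first exact: partial_prod_nonincreasing.
by exists 0 => _ [N _ <-]; exact: partial_prod_ge0.
Qed.

Lemma partial_prod_cvg : partial_prod @ \oo --> inf_prod u.
Proof. exact: partial_prod_is_cvg. Qed.

Lemma inf_prod_le N : inf_prod u <= partial_prod N.
Proof.
exact: nonincreasing_cvgn_ge partial_prod_nonincreasing partial_prod_is_cvg N.
Qed.

Lemma inf_prod_ge0 : 0 <= inf_prod u.
Proof.
apply: limr_ge; first exact: partial_prod_is_cvg.
by near=> N; exact: partial_prod_ge0.
Unshelve. all: by end_near.
Qed.

End partial_product.

Section survival.
Variables (R : realType) (f g : nat -> R).
Hypothesis f_nd : {homo f : m n / (m <= n)%N >-> m <= n}.
Hypothesis g_nd : {homo g : m n / (m <= n)%N >-> m <= n}.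
Hypothesis f0_g0 : - f 0%N < g 0%N.

Definition gf_ratio n := (g n + f n.-1) / (g n + f n).

Definition survival (m : R) n := (g 0%N - m) / (g 0%N + f 0%N) * partial_prod gf_ratio n.

Definition survival_lim (m : R) := (g 0%N - m) / (g 0%N + f 0%N) * inf_prod gf_ratio.

Lemma bound_rhsE m : bound_rhs f g m = 1 - survival_lim m.
Proof. by []. Qed.

Lemma gf_gt0 n : 0 < g n + f n.
Proof.
have gf00 : 0 < g 0%N + f 0%N by rewrite -[f 0%N]opprK subr_gt0.
by apply: (lt_le_trans gf00); apply: lerD; [apply: g_nd|apply: f_nd].
Qed.

Lemma gf_ratio_ge0 n : 0 <= gf_ratio n.
Proof.
rewrite divr_ge0 ?(ltW (gf_gt0 _)) //.
by apply: le_trans (ltW (gf_gt0 n.-1)) _; rewrite lerD2r g_nd // leq_pred.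
Qed.

Lemma gf_ratio_le1 n : gf_ratio n <= 1.
Proof. by rewrite ler_pdivrMr ?gf_gt0 // mul1r lerD2l f_nd // leq_pred. Qed.

Lemma survival0 m : survival m 0 * (g 0%N + f 0%N) = g 0%N - m.
Proof. by rewrite /survival partial_prod0 mulr1 divfK // gt_eqF ?gf_gt0. Qed.

Lemma survivalS m n :
  survival m n.+1 * (g n.+1 + f n.+1) = survival m n * (g n.+1 + f n).
Proof.
by rewrite /survival partial_prodS /gf_ratio -!mulrA mulVf ?mulr1 // gt_eqF ?gf_gt0.
Qed.

Lemma survival_cvg m : survival m @ \oo --> survival_lim m.
Proof. exact: cvgM (cvg_cst _) (partial_prod_cvg gf_ratio_ge0 gf_ratio_le1). Qed.

Section below_barrier.
Variable m : R.
Hypothesis m_le : m <= g 0%N.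

Let init_ge0 : 0 <= (g 0%N - m) / (g 0%N + f 0%N).
Proof. by rewrite divr_ge0 ?subr_ge0 // ltW ?gf_gt0. Qed.

Lemma survival_lim_ge0 : 0 <= survival_lim m.
Proof. by rewrite mulr_ge0 // (inf_prod_ge0 gf_ratio_ge0 gf_ratio_le1). Qed.

Lemma survival_lim_le n : survival_lim m <= survival m n.
Proof. by rewrite ler_wpM2l // (inf_prod_le gf_ratio_ge0 gf_ratio_le1). Qed.

Lemma survival_nonincreasing : nonincreasing_seq (survival m).
Proof.
move=> n k nk; rewrite ler_wpM2l //.
exact: partial_prod_nonincreasing gf_ratio_ge0 gf_ratio_le1 _ _ nk.
Qed.

End below_barrier.

Lemma survival0_le1 m : - f 0%N <= m -> survival m 0 <= 1.
Proof.
move=> m_ge; rewrite /survival partial_prod0 mulr1 ler_pdivrMr ?gf_gt0 //.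
by rewrite mul1r lerD2l -lerN2 opprK.
Qed.

End survival.

Lemma sigma_algebra_setI_closed (T : Type) (G : set (set T)) :
  sigma_algebra setT G -> setI_closed G.
Proof.
case=> G0 GC GU A B GA GB.
have GCT X : G X -> G (~` X) by move=> /GC; rewrite setTD.
rewrite -[A `&` B]setCK setCI; apply/GCT.
by rewrite -bigcup2E; apply: GU => -[|[|k]] /=; [exact: GCT|exact: GCT|exact: G0].
Qed.

Section filtration_lemmas.
Variables (d : measure_display) (T : measurableType d) (F : nat -> set (set T)).
Hypothesis hF : filtration F.

Lemma filtration_measurable n A : F n A -> measurable A.
Proof. by case: hF => /(_ n) [_ +] _; apply. Qed.

Lemma filtration_setI_closed n : setI_closed (F n).
Proof. by case: hF => /(_ n) [+ _] _; exact: sigma_algebra_setI_closed. Qed.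

Lemma filtration_le n k A : (n <= k)%N -> F n A -> F k A.
Proof.
move=> /subnKC <-; elim: (k - n)%N => [|i IH]; first by rewrite addn0.
by move=> /IH; case: hF => _ /(_ (n + i)%N); rewrite addnS; apply.
Qed.

End filtration_lemmas.

Section Rintegral_lower_bounds.
Variables (d : measure_display) (T : measurableType d) (R : realType).
Variable mu : {finite_measure set T -> \bar R}.

Lemma Rintegral_ge_cst A c (X : T -> R) : measurable A ->
  mu.-integrable A (EFin \o X) -> (forall x, A x -> c <= X x) ->
  c * fine (mu A) <= \int[mu]_(x in A) X x.
Proof.
move=> mA iX cX; rewrite -Rintegral_cst //; apply: le_Rintegral => //.
exact: finite_measure_integrable_cst.
Qed.

Lemma Rintegral_setD_ge A B c (X : T -> R) : measurable A -> measurable B ->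
  B `<=` A -> mu.-integrable A (EFin \o X) ->
  (forall x, A x -> ~ B x -> c <= X x) ->
  \int[mu]_(x in B) X x + c * (fine (mu A) - fine (mu B)) <=
  \int[mu]_(x in A) X x.
Proof.
move=> mA mB BA iX cX; have mAB := measurableD mA mB.
have AE : A = B `|` (A `\` B) by rewrite setDUK.
have muAB : fine (mu (A `\` B)) = fine (mu A) - fine (mu B).
  rewrite measureD ?setIidr // ?fineB ?fin_num_measure //.
  by rewrite ltey_eq fin_num_measure.
rewrite [in leRHS]AE Rintegral_setU -?AE //; last first.
  by apply/disj_set2P; rewrite setDE setICA setICr setI0.
rewrite lerD2l -muAB; apply: Rintegral_ge_cst => //; first exact: integrableS iX.
by move=> x [Ax nBx]; exact: cX.
Qed.

End Rintegral_lower_bounds.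

Section supermartingale_lemmas.
Variables (d : measure_display) (T : measurableType d) (R : realType).
Variables (P : probability T R) (F : nat -> set (set T)) (M : nat -> T -> R).
Hypothesis hF : filtration F.

Lemma supermartingale_integrable : supermartingale P F M ->
  forall n A, measurable A -> P.-integrable A (EFin \o M n).
Proof. by case=> _ iM _ n A mA; exact: integrableS (iM n). Qed.

Lemma supermartingale_Rintegral_le : supermartingale P F M ->
  forall n A, F n A -> \int[P]_(x in A) M n.+1 x <= \int[P]_(x in A) M n x.
Proof.
move=> hM n A FA; have mA := filtration_measurable hF FA.
case: (hM) => _ _ /(_ n) [Y [[FY iY YE] [N [mN PN0 YM]]]].
rewrite /Rintegral -YE //.
have iYA : P.-integrable A (EFin \o Y) by exact: integrableS iY.
have iMA := supermartingale_integrable hM n mA.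
rewrite (negligible_integral mN mA iYA PN0) (negligible_integral mN mA iMA PN0).
have mAN := measurableD mA mN.
apply: le_Rintegral => //; [exact: integrableS iYA|exact: integrableS iMA|].
by move=> x [Ax Nx]; apply: contrapT => /YM.
Qed.

Lemma Rintegral_eq_martingale : adapted F M ->
  (forall n, P.-integrable setT (EFin \o M n)) ->
  (forall n A, F n A -> \int[P]_(x in A) M n.+1 x = \int[P]_(x in A) M n x) ->
  martingale P F M.
Proof.
move=> adM iM ME; split => // n; exists (M n); split; last exact: aeW.
split => // A FA; have mA := filtration_measurable hF FA.
have fin k : (\int[P]_(x in A) (M k x)%:E)%E \is a fin_num.
  by apply: integrable_fin_num => //; exact: integrableS (iM k).
by rewrite -[LHS](fineK (fin n)) -[RHS](fineK (fin n.+1)) -!/(Rintegral _ _ _) ME.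
Qed.

End supermartingale_lemmas.

Section atom_algebra.
Variable T : Type.

Definition atom_algebra (C : set T) := [set A : set T | C `<=` A \/ A `&` C = set0].

Lemma sigma_algebra_atom C : sigma_algebra setT (atom_algebra C).
Proof.
split; first by right; rewrite set0I.
- move=> A [CA|AC0] /=; [right|left].
    by apply/seteqP; split=> x // [[_ nAx] Cx]; apply: nAx; exact: CA.
  by move=> x Cx; split=> // Ax; have : (A `&` C) x by []; rewrite AC0.
- move=> A AC /=; have [[k CAk]|noA] := pselect (exists k, C `<=` A k).
    by left=> x Cx; exists k => //; exact: CAk.
  right; apply/seteqP; split=> x // [[k _ Akx] Cx].
  have [CAk|AkC0] := AC k; first by apply: noA; exists k.
  by have : (A k `&` C) x by []; rewrite AkC0.
Qed.

Lemma atom_algebra_le C C' : C' `<=` C -> atom_algebra C `<=` atom_algebra C'.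
Proof.
move=> C'C A [CA|AC0] /=; [left|right]; first exact: subset_trans C'C CA.
apply/seteqP; split=> x // [Ax C'x].
have : (A `&` C) x by split; last exact: C'C.
by rewrite AC0.
Qed.

Lemma atom_algebra_preimage (U : Type) (X : T -> U) C c :
  (forall x, C x -> X x = c) -> forall B, atom_algebra C (X @^-1` B).
Proof.
move=> Xc B /=; have [Bc|nBc] := pselect (B c); [left|right].
  by move=> x Cx; rewrite /preimage /= Xc.
by apply/seteqP; split=> x // [/= BX Cx]; apply: nBc; rewrite -(Xc x Cx).
Qed.

End atom_algebra.

Lemma atom_algebra_Rintegral_eq (d : measure_display) (T : measurableType d)
    (R : realType) (mu : {measure set T -> \bar R}) (C : set T) (X Y : T -> R) :
  measurable C -> mu.-integrable setT (EFin \o X) ->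
  mu.-integrable setT (EFin \o Y) -> (forall x, ~ C x -> X x = Y x) ->
  \int[mu]_(x in C) X x = \int[mu]_(x in C) Y x ->
  forall A, measurable A -> atom_algebra C A ->
  \int[mu]_(x in A) X x = \int[mu]_(x in A) Y x.
Proof.
move=> mC iX iY XY XYC A mA [CA|AC0]; last first.
  apply: eq_Rintegral => x /set_mem Ax; apply: XY => Cx.
  by have : (A `&` C) x by []; rewrite AC0.
have AE : A = (A `\` C) `|` C by rewrite setUC setDUK.
have dAC : [disjoint A `\` C & C].
  by apply/disj_set2P; rewrite setDE -setIA setICl setI0.
rewrite AE !Rintegral_setU -?AE //; try exact: measurableD;
  try (by apply: integrableS iX); try (by apply: integrableS iY).
congr (_ + _); last exact: XYC.
by apply: eq_Rintegral => x /set_mem [_ nCx]; apply: XY.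
Qed.

Section hitting_probability.
Variables (R : realType) (f g : nat -> R).
Variables (d : measure_display) (T : measurableType d) (P : probability T R).
Variables (F : nat -> set (set T)) (M : nat -> T -> R).
Hypotheses (hF : filtration F) (hM : supermartingale P F M).

Definition alive n := [set x | forall k, (k <= n)%N -> M k x < g k].

Lemma aliveS n : alive n.+1 = alive n `&` [set x | M n.+1 x < g n.+1].
Proof.
apply/seteqP; split=> x /=.
  by move=> Mg; split=> [k kn|]; apply: Mg => //; rewrite (leq_trans kn).
by move=> [Mg Mg1] k; rewrite leq_eqVlt ltnS => /predU1P[->|]; [|exact: Mg].
Qed.

Lemma alive0 : alive 0 = [set x | M 0%N x < g 0%N].
Proof.
apply/seteqP; split=> x /=; first exact.
by move=> Mg k; rewrite leqn0 => /eqP ->.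
Qed.

Lemma F_alive n : F n (alive n).
Proof.
have F_lt k : F k [set x | M k x < g k].
  case: hM => adM _ _; have := adM k _ (measurable_itv `]-oo, g k[).
  by congr F; apply/seteqP; split=> x /=; rewrite in_itv.
elim: n => [|n IH].
  by rewrite alive0.
rewrite aliveS; apply: (filtration_setI_closed hF); last exact: F_lt.
exact: filtration_le (leqnSn n) IH.
Qed.

Lemma measurable_alive n : measurable (alive n).
Proof. exact: (filtration_measurable hF (F_alive n)). Qed.

Lemma hit_bigcup :
  [set x | exists n, g n <= M n x] = \bigcup_n ~` alive n.
Proof.
apply/seteqP; split=> x /= [n].
  by move=> gM; exists n => // /(_ n (leqnn n)); rewrite ltNge gM.
by move=> _ /existsNP [k /not_implyP [_ /negP]]; rewrite -leNgt; exists k.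
Qed.

Let q n := fine (P (alive n)).
Let e n := \int[P]_(x in alive n) M n x.
Let deficit n := g n * q n - e n.

Hypothesis M_ge : forall n x, - f n <= M n x.

Lemma deficit_le n : deficit n <= (g n + f n) * q n.
Proof.
have : - f n * q n <= e n.
  apply: Rintegral_ge_cst; [exact: measurable_alive| |by move=> x _].
  exact: (supermartingale_integrable hM n (measurable_alive n)).
rewrite /deficit; nra.
Qed.

Lemma deficit0_ge : g 0%N - \int[P]_x M 0%N x <= deficit 0.
Proof.
have gM x : setT x -> ~ alive 0 x -> g 0%N <= M 0%N x.
  by move=> _; rewrite alive0 /= => /negP; rewrite -leNgt.
have := Rintegral_setD_ge measurableT (measurable_alive 0) (@subsetT _ _)
  (supermartingale_integrable hM 0 measurableT) gM.
rewrite (_ : fine (P setT) = 1) ?probability_setT // -/(q 0%N) -/(e 0%N) /deficit.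
lra.
Qed.

Lemma deficitS_ge n : deficit n + (g n.+1 - g n) * q n <= deficit n.+1.
Proof.
have gM x : alive n x -> ~ alive n.+1 x -> g n.+1 <= M n.+1 x.
  by move=> An; rewrite aliveS => /not_andP [//|/negP]; rewrite -leNgt.
have sub : alive n.+1 `<=` alive n by rewrite aliveS => x [].
have := Rintegral_setD_ge (measurable_alive n) (measurable_alive n.+1) sub
  (supermartingale_integrable hM n.+1 (measurable_alive n)) gM.
have := supermartingale_Rintegral_le hF hM (F_alive n).
rewrite -/(q n) -/(q n.+1) -/(e n) -/(e n.+1) /deficit; lra.
Qed.

Hypothesis f_nd : {homo f : m n / (m <= n)%N >-> m <= n}.
Hypothesis g_nd : {homo g : m n / (m <= n)%N >-> m <= n}.
Hypothesis f0_g0 : - f 0%N < g 0%N.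

Let E := \int[P]_x M 0%N x.

Let le_alive_prob n r : r * (g n + f n) <= deficit n -> r <= q n.
Proof.
move=> r_le; rewrite -(ler_pM2r (gf_gt0 f_nd g_nd f0_g0 n)) [in leRHS]mulrC.
exact: le_trans r_le (deficit_le n).
Qed.

Lemma survival_le_deficit n : survival f g E n * (g n + f n) <= deficit n.
Proof.
elim: n => [|n IH]; first by rewrite (survival0 f_nd g_nd f0_g0); exact: deficit0_ge.
have s_le_q := le_alive_prob IH.
have g_n : g n <= g n.+1 by exact: g_nd.
rewrite (survivalS f_nd g_nd f0_g0); apply: le_trans (deficitS_ge n); nra.
Qed.

Lemma hitting_prob_le : E <= g 0%N ->
  (P [set x | exists n, (g n <= M n x)%R] <= (bound_rhs f g E)%:E)%E.
Proof.
move=> E_le; rewrite hit_bigcup.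
have mC n : measurable (~` alive n) by exact/measurableC/measurable_alive.
have C_nd : nondecreasing_seq (fun n => ~` alive n).
  move=> n k nk; apply/subsetPset => x /= nAx Ax; apply: nAx => i ij.
  by apply: Ax; rewrite (leq_trans ij).
have mU : measurable (\bigcup_n ~` alive n) by exact: bigcup_measurable.
have C_cvg := @nondecreasing_cvg_mu _ _ _ P _ mC mU C_nd.
rewrite -(cvg_lim _ C_cvg) //.
apply: lime_le; first by apply/cvg_ex; eexists; exact: C_cvg.
apply: nearW => n /=; have mA := measurable_alive n.
have PA : P (alive n) = (q n)%:E by rewrite fineK // fin_num_measure.
rewrite probability_setC //.
rewrite PA -EFinB lee_fin bound_rhsE lerD2l lerN2.
apply: le_trans (survival_lim_le f_nd g_nd f0_g0 E_le n) _.
exact: le_alive_prob (survival_le_deficit n).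
Qed.

End hitting_probability.

Lemma eseries_EFin (R : realType) (u : nat -> R) (l : R) :
  (fun N => \sum_(0 <= k < N) u k) @ \oo --> l ->
  (\sum_(k <oo) (u k)%:E = l%:E)%E.
Proof.
move=> u_cvg; apply: cvg_lim => //; apply/fine_cvgP; split.
  by near=> N; rewrite sumEFin.
by apply: cvg_trans u_cvg; apply: near_eq_cvg; near=> N; rewrite /= sumEFin.
Unshelve. all: by end_near.
Qed.

Lemma sum_indic (R : realType) (w : nat -> R) (A : set nat) m n :
  \sum_(m <= k < n) w k * \1_A k = \sum_(m <= k < n | k \in A) w k.
Proof.
rewrite [RHS]big_mkcond; apply: eq_bigr => k _.
by rewrite indicE; case: (k \in A); rewrite ?mulr1 ?mulr0.
Qed.

Definition tail n : set nat := [set k | (k == 0%N) || (n < k)%N].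

Lemma tailE n : tail n = [set n.+1] `|` tail n.+1.
Proof. by apply/seteqP; split=> k; rewrite /tail /=; lia. Qed.

Section telescoping_probability.
Variables (R : realType) (s : nat -> R) (l : R).
Hypotheses (s_decr : forall n, s n.+1 <= s n) (s_cvg : s @ \oo --> l).
Hypotheses (l_ge0 : 0 <= l) (s0 : s 0%N = 1).

(* Point 0 carries l and point j.+1 carries s j - s j.+1, so that the set
   tail n = {0} U (n, oo) has mass s n. *)
Definition tele_weight k := if k is j.+1 then s j - s j.+1 else l.

Lemma tele_weight_ge0 k : 0 <= tele_weight k.
Proof. by case: k => [|j] //=; rewrite subr_ge0. Qed.

Definition tele_measure :=
  mseries (fun k => mscale (NngNum (tele_weight_ge0 k)) \d_k) 0.

Lemma tele_measureE A :
  tele_measure A = (\sum_(k <oo) (tele_weight k * \1_A k)%:E)%E.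
Proof. by []. Qed.

Lemma tele_measure1 j : tele_measure [set j] = (tele_weight j)%:E.
Proof.
rewrite tele_measureE; apply: eseries_EFin; apply: cvg_near_cst.
near=> N; rewrite sum_indic (eq_bigl (eq_op^~ j)) => [|k]; last exact: in_set1.
have jN : (j < N)%N by near: N; exists j.+1.
by rewrite big_nat1_eq jN.
Unshelve. all: by end_near.
Qed.

Lemma indic_tail n k : \1_(tail n) k = ((k == 0%N) || (n < k)%N)%:R :> R.
Proof.
rewrite indicE (_ : k \in tail n = (k == 0%N) || (n < k)%N) //.
by apply/idP/idP => [/set_mem|/mem_set].
Qed.

Lemma tele_measure_tail n : tele_measure (tail n) = (s n)%:E.
Proof.
rewrite tele_measureE; apply: eseries_EFin; rewrite -(cvg_shiftn n.+1) /=.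
have sumE N : \sum_(0 <= k < N + n.+1) tele_weight k * \1_(tail n) k =
    l + s n - s (N + n)%N.
  elim: N => [|N IH].
    rewrite add0n addrK big_nat_recl // indic_tail mulr1 big_nat_cond big1 ?addr0 //.
    by move=> k /andP[/andP[_ kn] _]; rewrite indic_tail /= ltnS leqNgt kn mulr0.
  rewrite addSn big_nat_recr //= IH indic_tail leq_addl orbT mulr1 addnS /=; lra.
rewrite (eq_cvg _ _ sumE).
have /(cvgB (cvg_cst (l + s n))) : (fun N => s (N + n)%N) @ \oo --> l.
  by rewrite (cvg_shiftn n s).
by rewrite (addrC (l + s n)) addKr.
Qed.

Lemma tele_measure_setT : tele_measure setT = 1%E.
Proof.
rewrite (_ : setT = tail 0) ?tele_measure_tail ?s0 //.
by apply/seteqP; split=> // -[|k].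
Qed.

HB.instance Definition _ := Measure.on tele_measure.

Definition tele_prob : probability nat R :=
  HB.pack_for (probability nat R) tele_measure
    (Measure_isProbability.Build _ _ _ tele_measure tele_measure_setT).

Lemma tele_probE A : tele_prob A = tele_measure A.
Proof. by []. Qed.

End telescoping_probability.

Definition extremal_filtration n := atom_algebra (tail n.+1).

Lemma filtration_extremal : filtration extremal_filtration.
Proof.
split=> [n|n]; first by split=> //; exact: sigma_algebra_atom.
by apply: atom_algebra_le => k; rewrite /tail /=; lia.
Qed.

Section extremal_martingale.
Variables (R : realType) (f g : nat -> R).
Hypothesis f_nd : {homo f : m n / (m <= n)%N >-> m <= n}.
Hypothesis g_nd : {homo g : m n / (m <= n)%N >-> m <= n}.
Hypothesis f0_g0 : - f 0%N < g 0%N.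
Variable m : R.
Hypotheses (m_ge : - f 0%N <= m) (m_le : m <= g 0%N).

Let s n := if n is k.+1 then survival f g m k else 1.

Let s_decr n : s n.+1 <= s n.
Proof.
case: n => [|n] /=; first exact: survival0_le1.
exact: survival_nonincreasing.
Qed.

Let s_cvg : s @ \oo --> survival_lim f g m.
Proof. by rewrite -cvg_shiftS; exact: survival_cvg. Qed.

Definition extremal_prob : probability nat R :=
  tele_prob s_decr s_cvg (survival_lim_ge0 f_nd g_nd f0_g0 m_le) erefl.

Local Notation P := extremal_prob.

(* State 0 never reaches the barrier; state j.+1 sits at -f n for n < j,
   reaches the barrier at time j and stays at g j afterwards. *)
Definition extremal_process n (k : nat) : R :=
  if (k == 0%N) || (n.+1 < k)%N then - f n else g k.-1.

Local Notation M := extremal_process.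

Lemma extremal_process_tail n k : tail n.+1 k -> M n k = - f n.
Proof. by rewrite /extremal_process => ->. Qed.

Lemma extremal_process_ge n k : - f n <= M n k.
Proof.
rewrite /extremal_process; case: ifPn => // _.
have f0n : - f n <= - f 0%N by rewrite lerN2 f_nd.
by apply: le_trans f0n (le_trans (ltW f0_g0) (g_nd (leq0n k.-1))).
Qed.

Lemma extremal_process_le n k : M n k <= g n.
Proof.
rewrite /extremal_process; case: ifPn => [_|/norP[_ kn]]; last by apply: g_nd; lia.
by have := gf_gt0 f_nd g_nd f0_g0 n; lra.
Qed.

Lemma extremal_integrable n A : P.-integrable A (EFin \o M n).
Proof.
apply: (@le_integrable _ _ _ P A I _ (EFin \o cst (`|f n| + `|g n|))) => //.
- move=> x _ /=; rewrite lee_fin [leRHS]ger0_norm ?addr_ge0 // ler_norml.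
  have := extremal_process_ge n x; have := extremal_process_le n x.
  have := ler_norm (f n); have := ler_norm (g n); have := normr_ge0 (g n).
  have := normr_ge0 (f n); lra.
- exact: finite_measure_integrable_cst.
Qed.

Lemma extremal_process_stopped n j : (j <= n)%N -> M n j.+1 = g j.
Proof. by move=> jn; rewrite /extremal_process /= ltnS ltnNge jn. Qed.

Let w := tele_weight s (survival_lim f g m).

Let P_set1 j : fine (P [set j]) = w j.
Proof. by rewrite tele_probE tele_measure1. Qed.

Let P_tail n : fine (P (tail n)) = s n.
Proof. by rewrite tele_probE tele_measure_tail. Qed.

Let Rintegral_const A (X : nat -> R) c : (forall k, A k -> X k = c) ->
  \int[P]_(k in A) X k = c * fine (P A).
Proof.
by move=> Xc; rewrite -Rintegral_cst //; apply: eq_Rintegral => k /set_mem /Xc.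
Qed.

Lemma extremal_Rintegral_step n :
  \int[P]_(k in tail n.+1) M n.+1 k = \int[P]_(k in tail n.+1) M n k.
Proof.
rewrite [RHS](Rintegral_const (c := - f n)); last exact: extremal_process_tail.
have dj : [disjoint [set n.+2] & tail n.+2].
  by apply/disj_set2P/seteqP; split=> // k [/= ->]; rewrite /tail /= ltnn.
rewrite [in LHS]tailE Rintegral_setU -?tailE //; last exact: extremal_integrable.
rewrite (Rintegral_const (c := g n.+1)); last first.
  by move=> k ->; exact: extremal_process_stopped.
rewrite (Rintegral_const (c := - f n.+1)); last exact: extremal_process_tail.
rewrite !P_set1 !P_tail /= -/(survival f g m n.+1) -/(survival f g m n) /=.
have := survivalS f_nd g_nd f0_g0 m n; nra.
Qed.

Lemma martingale_extremal : martingale P extremal_filtration M.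
Proof.
apply: Rintegral_eq_martingale.
- exact: filtration_extremal.
- move=> n B _; apply: atom_algebra_preimage; exact: extremal_process_tail.
- by move=> n; exact: extremal_integrable.
move=> n A FA; apply: atom_algebra_Rintegral_eq FA => //;
  [exact: extremal_integrable..| |exact: extremal_Rintegral_step].
case=> [|j]; rewrite /tail /=; first by move/(_ isT).
by move=> /negP jn; rewrite !extremal_process_stopped //; lia.
Qed.

Lemma expect_extremal : expect P (M 0%N) = m.
Proof.
have setTE : [set: nat] = [set 1%N] `|` tail 1.
  by rewrite -tailE; apply/seteqP; split=> // -[|k].
have dj : [disjoint [set 1%N] & tail 1].
  by apply/disj_set2P/seteqP; split=> // k [/= ->].
have -> : expect P (M 0%N) = \int[P]_(k in [set 1%N] `|` tail 1) M 0%N k.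
  by rewrite -setTE.
rewrite Rintegral_setU -?setTE //; last exact: extremal_integrable.
rewrite (Rintegral_const (c := g 0%N)); last first.
  by move=> k ->; exact: extremal_process_stopped.
rewrite (Rintegral_const (c := - f 0%N)); last exact: extremal_process_tail.
rewrite !P_set1 P_tail /=.
have := survival0 f_nd g_nd f0_g0 m; nra.
Qed.

Lemma extremal_hitting_prob :
  P [set k | exists n, (g n <= M n k)%R] = (bound_rhs f g m)%:E.
Proof.
have -> : [set k | exists n, (g n <= M n k)%R] = ~` [set 0%N].
  apply/seteqP; split=> [k [n + /= k0]|[|j] /= k0].
  - rewrite k0 extremal_process_tail //.
    by have := gf_gt0 f_nd g_nd f0_g0 n; lra.
  - by case: k0.
  - by exists j; rewrite extremal_process_stopped.
rewrite probability_setC // -[P [set 0%N]]fineK ?fin_num_measure // P_set1.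
by rewrite bound_rhsE.
Qed.

End extremal_martingale.

Unset Implicit Arguments.

Theorem theorem2 (R : realType) (f g : nat -> R)
  (hf : {homo f : m n / (m <= n)%N >-> m <= n})
  (hg : {homo g : m n / (m <= n)%N >-> m <= n})
  (hfg : - f 0%N < g 0%N) :
  (* (a) *)
  (forall (d : measure_display) (T : measurableType d) (P : probability T R)
     (F : nat -> set (set T)) (M : nat -> T -> R),
     filtration F -> supermartingale P F M ->
     (forall n x, - f n <= M n x) ->
     - f 0%N <= expect P (M 0%N) <= g 0%N ->
     (P [set x | exists n, (g n <= M n x)%R] <= (bound_rhs f g (expect P (M 0%N)))%:E)%E)
  /\
  (* (b) *)
  (forall m : R, - f 0%N <= m <= g 0%N ->
     exists (d : measure_display) (T : measurableType d) (P : probability T R)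
       (F : nat -> set (set T)) (M : nat -> T -> R),
       [/\ filtration F, martingale P F M,
           (forall n x, - f n <= M n x),
           expect P (M 0%N) = m &
           P [set x | exists n, (g n <= M n x)%R] = (bound_rhs f g m)%:E]).
Proof.
split.
- move=> d T P F M hF hM M_ge /andP[_ E_le].
  exact: hitting_prob_le hF hM M_ge hf hg hfg E_le.
- move=> m /andP[m_ge m_le].
  exists default_measure_display, nat, (extremal_prob hf hg hfg m_ge m_le),
    extremal_filtration, (extremal_process f g).
  split.
  + exact: filtration_extremal.
  + exact: martingale_extremal.
  + exact: extremal_process_ge.
  + exact: expect_extremal.
  + exact: extremal_hitting_prob.
Qed.
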